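(* Let $n\ge2$, $b_1,\dots,b_n\in\mathbb{R}^d$ with $\|b_i\|\le R'$ ($R'>0$), $B=\frac1n[b_1,\dots,b_n]^T$, each $g_i^*:\mathbb{R}\to\mathbb{R}\cup\{+\infty\}$ proper, lower semicontinuous, convex, $g^*(y)=\frac1n\sum_ig_i^*(y_i)$, and $\ell:\mathbb{R}^d\to\mathbb{R}\cup\{+\infty\}$ proper, lower semicontinuous, $\sigma$-strongly convex ($\sigma\ge0$). For the VRPDA$^2$ algorithm in the context, for all $k\ge2$ and all $(u,v)\in\mathcal{X}\times\mathcal{Y}$, with expectation taken over all randomness of the algorithm, $$\begin{aligned}\mathbb{E}[\psi_k(y_k)]\ge\mathbb{E}\Big[&\psi_{k-1}(y_{k-1})+\frac n2\|y_k-y_{k-1}\|^2+a_kg^*_{j_k}(y_{k,j_k})\\&+a_k\langle B(x_k-x_{k-1}),y_k-v\rangle-a_{k-1}\langle B(x_{k-1}-x_{k-2}),y_{k-1}-v\rangle\\&-na_{k-1}\langle B(x_{k-1}-x_{k-2}),y_k-y_{k-1}\rangle+a_k\langle-Bx_k,y_k-v\rangle\\&-(n-1)a_k\big(\langle B(x_{k-1}-u),y_k-y_{k-1}\rangle+\langle Bu,y_k-y_{k-1}\rangle\big)\Big],\end{aligned}$$ $$\mathbb{E}[\phi_k(x_k)]\ge\mathbb{E}\Big[\phi_{k-1}(x_{k-1})+\frac{n+\sigma A_{k-1}}{2}\|x_k-x_{k-1}\|^2+a_k\big(\langle x_k-u,B^Ty_k\rangle+(n-1)\langle x_k-u,B^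T(y_k-y_{k-1})\rangle+\ell(x_k)\big)\Big].$$
   Context: Norms are Euclidean; $\sigma$-strong convexity of $f$ means $f((1-\alpha)x+\alpha\hat x)\le(1-\alpha)f(x)+\alpha f(\hat x)-\frac\sigma2\alpha(1-\alpha)\|\hat x-x\|^2$. $\mathcal{X}=\mathrm{dom}(\ell)$, $\mathcal{Y}=\mathrm{dom}(g^* )$; $y_{k,j}$ is the $j$-th coordinate of $y_k$. VRPDA$^2$ algorithm: given $(x_0,y_0),(u,v)\in\mathcal{X}\times\mathcal{Y}$: $\phi_0(x)=\frac12\|x-x_0\|^2$, $\psi_0(y)=\frac12\|y-y_0\|^2$, $a_0=A_0=0$, $\tilde a_1=\frac1{2R'}$; $\tilde\psi_1(y)=\psi_0(y)+\tilde a_1(\langle-Bx_0,y-v\rangle+g^*(y))$, $y_1=\arg\min\tilde\psi_1$; $z_1=B^Ty_1$; $\tilde\phi_1(x)=\phi_0(x)+\tilde a_1(\langle x-u,z_1\rangle+\ell(x))$, $x_1=\arg\min\tilde\phi_1$; $\psi_1=n\tilde\psi_1$, $\phi_1=n\tilde\phi_1$, $a_1=A_1=n\tilde a_1$, $a_2=\frac{a_1}{n-1}$, $A_2=A_1+a_2$. For $k=2,3,\dots$: $\bar x_{k-1}=x_{k-1}+\frac{a_{k-1}}{a_k}(x_{k-1}-x_{k-2})$; pick $j_k$ uniformly at random from $\{1,\dots,n\}$, independently of the past; $\psi_k(y)=\psi_{k-1}(y)+a_k(-b_{j_k}^T\bar x_{k-1}(y_{j_k}-v_{j_k})+g^*_{j_k}(y_{j_k}))$,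 $y_k=\arg\min_y\psi_k(y)$; $\phi_k(x)=\phi_{k-1}(x)+a_k(\langle x-u,z_{k-1}+(y_{k,j_k}-y_{k-1,j_k})b_{j_k}\rangle+\ell(x))$, $x_k=\arg\min_x\phi_k(x)$; $z_k=z_{k-1}+\frac1n(y_{k,j_k}-y_{k-1,j_k})b_{j_k}$; $a_{k+1}=\min\{(1+\frac1{n-1})a_k,\frac{\sqrt{n(n+\sigma A_k)}}{2R'}\}$, $A_{k+1}=A_k+a_{k+1}$. *)

From HB Require Import structures.
From mathcomp Require Import all_boot all_order all_algebra.
From mathcomp Require Import all_classical all_reals all_analysis.
Set Implicit Arguments. Unset Strict Implicit. Unset Printing Implicit Defensive.
Import Order.TTheory GRing.Theory Num.Theory.
Import numFieldNormedType.Exports.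
Local Open Scope ring_scope.

Definition dot {R : realType} {m : nat} (u w : 'cV[R]_m) : R :=
  \sum_(i < m) u i ord0 * w i ord0.
Definition sqn {R : realType} {m : nat} (u : 'cV[R]_m) : R := dot u u.

Definition Bm {R : realType} {n d : nat} (b : 'I_n -> 'cV[R]_d) : 'M[R]_(n, d) :=
  \matrix_(i < n, j < d) ((n%:R)^-1 * b i j ord0).

Local Open Scope ereal_scope.

Definition proper_fun {T : Type} {R : realType} (f : T -> \bar R) : Prop :=
  (forall x, f x != -oo) /\ (exists x, f x \is a fin_num).

Definition convex_ext {R : realType} (f : R -> \bar R) : Prop :=
  forall (x x' a : R), (0 < a < 1)%R ->
    f ((1 - a) * x + a * x')%R <= (1 - a)%:E * f x + a%:E * f x'.

Definition strongly_convex {R : realType} {d : nat} (sigma : R)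
  (f : 'cV[R]_d -> \bar R) : Prop :=
  forall (x x' : 'cV[R]_d) (a : R), (0 < a < 1)%R ->
    f ((1 - a) *: x + a *: x')%R <=
      (1 - a)%:E * f x + a%:E * f x' - (sigma / 2 * a * (1 - a) * sqn (x' - x))%:E.

Definition gstar {R : realType} {n : nat} (gs : 'I_n -> R -> \bar R)
  (y : 'cV[R]_n) : \bar R :=
  ((n%:R)^-1)%:E * \sum_(i < n) gs i (y i ord0).

Definition domX {R : realType} {d : nat} (l : 'cV[R]_d -> \bar R) (x : 'cV[R]_d) : Prop :=
  l x < +oo.
Definition domY {R : realType} {n : nat} (gs : 'I_n -> R -> \bar R) (y : 'cV[R]_n) : Prop :=
  forall i, gs i (y i ord0) < +oo.

Local Close Scope ereal_scope.

Fixpoint aA {R : realType} (n : nat) (sigma Rp : R) (k : nat) : R * R :=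
  match k with
  | 0 => (0, 0)
  | 1 => (n%:R / (2 * Rp), n%:R / (2 * Rp))
  | 2 => let a1 := n%:R / (2 * Rp) in (a1 / (n%:R - 1), a1 + a1 / (n%:R - 1))
  | k'.+1 =>
      let p := aA n sigma Rp k' in
      let a := Num.min ((1 + (n%:R - 1)^-1) * p.1)
                       (Num.sqrt (n%:R * (n%:R + sigma * p.2)) / (2 * Rp)) in
      (a, p.2 + a)
  end.
Definition sa {R : realType} (n : nat) (sigma Rp : R) (k : nat) : R := (aA n sigma Rp k).1.
Definition sA {R : realType} (n : nat) (sigma Rp : R) (k : nat) : R := (aA n sigma Rp k).2.
Definition at1 {R : realType} (Rp : R) : R := (2 * Rp)^-1.

(* The iterates are given as functions of the random index sequence js
   (js k = j_k, only used for k >= 2) and of the step k. *)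

Fixpoint zs {R : realType} {n d : nat} (b : 'I_n -> 'cV[R]_d)
  (ys : (nat -> 'I_n) -> nat -> 'cV[R]_n) (js : nat -> 'I_n) (k : nat) : 'cV[R]_d :=
  match k with
  | 0 => 0
  | 1 => (Bm b)^T *m ys js 1%N
  | k'.+1 => let j := js k in
      zs b ys js k' + ((n%:R)^-1 * (ys js k j ord0 - ys js k' j ord0)) *: b j
  end.

Definition xbar {R : realType} {n d : nat} (sigma Rp : R)
  (xs : (nat -> 'I_n) -> nat -> 'cV[R]_d) (js : nat -> 'I_n) (k : nat) : 'cV[R]_d :=
  xs js k + (sa n sigma Rp k / sa n sigma Rp k.+1) *: (xs js k - xs js k.-1).

Local Open Scope ereal_scope.

Definition psit1 {R : realType} {n d : nat} (b : 'I_n -> 'cV[R]_d)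
  (gs : 'I_n -> R -> \bar R) (Rp : R) (x0 : 'cV[R]_d) (y0 v : 'cV[R]_n)
  (y : 'cV[R]_n) : \bar R :=
  (sqn (y - y0) / 2)%:E + (at1 Rp)%:E * ((dot (- (Bm b *m x0)) (y - v))%:E + gstar gs y).

Definition phit1 {R : realType} {n d : nat} (b : 'I_n -> 'cV[R]_d)
  (l : 'cV[R]_d -> \bar R) (Rp : R) (x0 u : 'cV[R]_d)
  (ys : (nat -> 'I_n) -> nat -> 'cV[R]_n) (js : nat -> 'I_n)
  (x : 'cV[R]_d) : \bar R :=
  (sqn (x - x0) / 2)%:E + (at1 Rp)%:E * ((dot (x - u) (zs b ys js 1))%:E + l x).

Fixpoint psi {R : realType} {n d : nat} (b : 'I_n -> 'cV[R]_d)
  (gs : 'I_n -> R -> \bar R) (sigma Rp : R) (x0 : 'cV[R]_d) (y0 v : 'cV[R]_n)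
  (xs : (nat -> 'I_n) -> nat -> 'cV[R]_d) (js : nat -> 'I_n) (k : nat)
  (y : 'cV[R]_n) : \bar R :=
  match k with
  | 0 => (sqn (y - y0) / 2)%:E
  | 1 => (n%:R)%:E * psit1 b gs Rp x0 y0 v y
  | k'.+1 => let j := js k in
      psi b gs sigma Rp x0 y0 v xs js k' y
      + (sa n sigma Rp k)%:E *
          ((- dot (b j) (xbar sigma Rp xs js k') * (y j ord0 - v j ord0))%:E + gs j (y j ord0))
  end.

Fixpoint phi {R : realType} {n d : nat} (b : 'I_n -> 'cV[R]_d)
  (l : 'cV[R]_d -> \bar R) (sigma Rp : R) (x0 u : 'cV[R]_d)
  (ys : (nat -> 'I_n) -> nat -> 'cV[R]_n) (js : nat -> 'I_n) (k : nat)
  (x : 'cV[R]_d) : \bar R :=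
  match k with
  | 0 => (sqn (x - x0) / 2)%:E
  | 1 => (n%:R)%:E * phit1 b l Rp x0 u ys js x
  | k'.+1 => let j := js k in
      phi b l sigma Rp x0 u ys js k' x
      + (sa n sigma Rp k)%:E *
          ((dot (x - u) (zs b ys js k' + (ys js k j ord0 - ys js k' j ord0) *: b j))%:E + l x)
  end.

(* Expectation over all the randomness up to step k: j_2, ..., j_k are i.i.d.
   uniform on {1..n} (here 'I_n).  We average over all index sequences
   t : 'I_(k+1) -> 'I_n (entries 0 and 1 are dummies, uniform as well and unused). *)
Definition Exp {R : realType} (n k : nat) (F : (nat -> 'I_n) -> \bar R) : \bar R :=
  ((n%:R ^+ k.+1)^-1)%:E *
    \sum_(t : {ffun 'I_k.+1 -> 'I_n}) F (fun i => t (inord i)).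

(* Both phi_k and psi_k are strongly convex, with moduli n + sigma A_k and n,
   and x_k, y_k are their minimizers, so phi_k(x) >= phi_k(x_k)
   + (n + sigma A_k)/2 |x - x_k|^2, and likewise for psi_k.  Applied to
   phi_(k-1), psi_(k-1) at x_k, y_k this gives both inequalities pointwise, up
   to the linear terms.  Since psi_(k-1) is separable and psi_k only adds a
   function of the coordinate j_k, y_k differs from y_(k-1) in coordinate j_k
   only; hence z_k = B^T y_k, which puts the linear term of phi_k in the stated
   form.  For psi_k, the linear term -a_k <b_j, xbar_(k-1)> (y_(k,j) - v_j),
   j = j_k, differs from the stated bilinear terms by
   <B w, y_(k-1) - v> - <b_j, w> (y_(k-1,j) - v_j) with w = a_k xbar_(k-1).
   As w and y_(k-1) only depend on j_2, ..., j_(k-1), this averages to zero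
   over the uniform index j_k. *)

From HB Require Import structures.
From mathcomp Require Import all_boot all_order all_algebra.
From mathcomp Require Import ring lra.
From mathcomp Require Import all_classical all_reals all_analysis.
Import Order.TTheory GRing.Theory Num.Theory.
Import numFieldNormedType.Exports.

Set Implicit Arguments. Unset Strict Implicit. Unset Printing Implicit Defensive.
Local Open Scope ring_scope.

Section InnerProduct.
Variables (R : realType) (m : nat).
Implicit Types (p q w : 'cV[R]_m) (r a : R).

Lemma dotC p q : dot p q = dot q p.
Proof. by apply: eq_bigr => i _; rewrite mulrC. Qed.

Lemma dotDl p q w : dot (p + q) w = dot p w + dot q w.
Proof. by rewrite /dot -big_split; apply: eq_bigr => i _; rewrite mxE mulrDl. Qed.

Lemma dotZl r p w : dot (r *: p) w = r * dot p w.
Proof. by rewrite /dot mulr_sumr; apply: eq_bigr => i _; rewrite mxE mulrA. Qed.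

Lemma dotNl p w : dot (- p) w = - dot p w.
Proof. by rewrite -scaleN1r dotZl mulN1r. Qed.

Lemma dotBl p q w : dot (p - q) w = dot p w - dot q w.
Proof. by rewrite dotDl dotNl. Qed.

Lemma dotDr p q w : dot w (p + q) = dot w p + dot w q.
Proof. by rewrite !(dotC w) dotDl. Qed.

Lemma dotZr r p w : dot w (r *: p) = r * dot w p.
Proof. by rewrite !(dotC w) dotZl. Qed.

Lemma dotNr p w : dot w (- p) = - dot w p.
Proof. by rewrite !(dotC w) dotNl. Qed.

Lemma dotBr p q w : dot w (p - q) = dot w p - dot w q.
Proof. by rewrite !(dotC w) dotBl. Qed.

Lemma sqn_ge0 p : 0 <= sqn p.
Proof. by apply: sumr_ge0 => i _; rewrite -expr2 sqr_ge0. Qed.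

Lemma sqn_eq0 p : sqn p = 0 -> p = 0.
Proof.
move=> /eqP; rewrite psumr_eq0 => [/allP p0|i _]; last by rewrite -expr2 sqr_ge0.
apply/matrixP => i j; rewrite (ord1 j) mxE.
by have /implyP/(_ isT) := p0 i (mem_index_enum i); rewrite mulf_eq0 orbb => /eqP.
Qed.

Lemma sqn_convex_comb p q w a : sqn ((1 - a) *: p + a *: q - w) =
  (1 - a) * sqn (p - w) + a * sqn (q - w) - a * (1 - a) * sqn (q - p).
Proof.
rewrite /sqn /dot !mulr_sumr -big_split -sumrB /=; apply: eq_bigr => i _.
by rewrite !mxE; ring.
Qed.

Lemma dot_affine w c p q a :
  dot w ((1 - a) *: p + a *: q - c) = (1 - a) * dot w (p - c) + a * dot w (q - c).
Proof. by rewrite !dotBr dotDr !dotZr; ring. Qed.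

Lemma dot_affinel w c p q a :
  dot ((1 - a) *: p + a *: q - c) w = (1 - a) * dot (p - c) w + a * dot (q - c) w.
Proof. by rewrite !(dotC _ w) dot_affine. Qed.

End InnerProduct.

Lemma ler_add_vanishing (R : realFieldType) (x y K : R) : 0 <= K ->
  (forall a, 0 < a < 1 -> x <= y + a * K) -> x <= y.
Proof.
move=> K0 xle; apply/ler_addgt0Pr => e e0.
have D0 : 0 < K + e + e by lra.
have a01 : 0 < e / (K + e + e) < 1.
  by rewrite divr_gt0 //= ltr_pdivrMr // mul1r; lra.
apply: le_trans (xle _ a01) _; rewrite lerD2l mulrAC ler_pdivrMr //; nra.
Qed.

Lemma sum_resample_coord (V : nmodType) (I T : finType) (i0 : I)
    (F : {ffun I -> T} -> T -> V) :
  (forall t t' : {ffun I -> T}, (forall i, i != i0 -> t i = t' i) -> F t =1 F t') ->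
  \sum_t \sum_j F t j = (\sum_t F t (t i0)) *+ #|T|.
Proof.
move=> Fi0; pose put (t : {ffun I -> T}) j : {ffun I -> T} :=
  [ffun i => if i == i0 then j else t i].
(* Reindex the double sum along this involution of {ffun I -> T} * T. *)
pose swap (p : {ffun I -> T} * T) := (put p.1 p.2, p.1 i0).
have swapK : involutive swap.
  move=> [t j]; rewrite /swap /= ffunE eqxx; congr pair.
  by apply/ffunP => i; rewrite !ffunE; case: eqP => [->|].
transitivity (\sum_t \sum_j F (put t j) j).
  apply: eq_bigr => t _; apply: eq_bigr => j _; apply: Fi0 => i /negbTE i_i0.
  by rewrite ffunE i_i0.
rewrite pair_big (reindex_inj (can_inj swapK)) /=.
transitivity (\sum_(p : {ffun I -> T} * T) F p.1 (p.1 i0)).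
  by apply: eq_bigr => -[t j] _; have := swapK (t, j); rewrite /swap /= => -[->].
rewrite -(pair_big xpredT xpredT (fun t _ => F t (t i0))) -sumrMnl.
by apply: eq_bigr => t _; rewrite sumr_const.
Qed.

Local Open Scope ereal_scope.

Section ExtendedReals.
Variable R : numDomainType.
Implicit Types x y : \bar R.

Lemma adde_neqNy x y : x != -oo -> y != -oo -> x + y != -oo.
Proof. by case: x; case: y. Qed.

Lemma sume_neqNy (I : Type) (r : seq I) (f : I -> \bar R) :
  (forall i, f i != -oo) -> \sum_(i <- r) f i != -oo.
Proof. by move=> fNy; elim: r => [|i r IH]; rewrite ?big_nil ?big_cons ?adde_neqNy. Qed.

Lemma fin_num_le x y : x != -oo -> x <= y -> y \is a fin_num -> x \is a fin_num.
Proof. by case: x => [x| |] //; case: y. Qed.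

End ExtendedReals.

Section FiniteStrongConvexity.
Variables (R : realType) (m : nat).
Local Notation V := 'cV[R]_m.
Implicit Types (F G : V -> \bar R) (s r : R).

(* Equivalent to [strongly_convex s G] for G never -oo, but phrased between
   the real values of G, so that it is preserved by sums and positive scaling. *)
Definition sconvex s G :=
  (forall y, G y != -oo) /\
  forall p q (a : R), (0 < a < 1)%R -> G p \is a fin_num -> G q \is a fin_num ->
    G ((1 - a) *: p + a *: q)%R <=
      ((1 - a) * fine (G p) + a * fine (G q) - s / 2 * a * (1 - a) * sqn (q - p))%:E.

Lemma sconvexD s1 s2 F G :
  sconvex s1 F -> sconvex s2 G -> sconvex (s1 + s2) (fun y => F y + G y).
Proof.
move=> [Fninf Fcvx] [Gninf Gcvx]; split=> [y|p q a a01].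
  exact: adde_neqNy.
rewrite !fin_numD => /andP[Fp Gp] /andP[Fq Gq].
rewrite !fineD //; apply: le_trans (leeD (Fcvx p q a a01 Fp Fq) (Gcvx p q a a01 Gp Gq)) _.
by rewrite -EFinD lee_fin; lra.
Qed.

Lemma sconvexZ r s G : (0 < r)%R -> sconvex s G -> sconvex (r * s) (fun y => r%:E * G y).
Proof.
move=> r0 [Gninf Gcvx]; have fin_r y : r%:E * G y \is a fin_num -> G y \is a fin_num.
  by move: (Gninf y); case: (G y) => //= _; rewrite mulry gtr0_sg // mul1e.
split=> [y|p q a a01 /fin_r Gp /fin_r Gq].
  by move: (Gninf y); case: (G y) => //= _; rewrite mulry gtr0_sg // mul1e.
rewrite !fineM //=; apply: le_trans (lee_wpmul2l _ (Gcvx p q a a01 Gp Gq)) _.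
  by rewrite lee_fin ltW.
by rewrite -EFinM lee_fin; lra.
Qed.

Lemma sconvex_affine (L : V -> R) :
  (forall p q a, L ((1 - a) *: p + a *: q) = (1 - a) * L p + a * L q)%R ->
  sconvex 0 (fun y => (L y)%:E).
Proof. by move=> Laff; split=> // p q a _ _ _; rewrite /= Laff lee_fin; lra. Qed.

Lemma sconvex_sqn (w : V) : sconvex 1 (fun y => (sqn (y - w) / 2)%:E).
Proof. by split=> // p q a _ _ _; rewrite /= sqn_convex_comb lee_fin; lra. Qed.

Lemma sconvex_coord (g : R -> \bar R) (j : 'I_m) :
  (forall x, g x != -oo) -> convex_ext g -> sconvex 0 (fun y => g (y j ord0)).
Proof.
move=> gninf gcvx; split=> // p q a a01 /=; rewrite !mxE => gp gq.
apply: le_trans (gcvx _ _ _ a01) _; move: gp gq.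
case: (g (p j ord0)) => // tp _; case: (g (q j ord0)) => //= tq _.
by rewrite -!EFinM -EFinD lee_fin; lra.
Qed.

Lemma sconvex_sum (I : Type) (r : seq I) (F : I -> V -> \bar R) :
  (forall i, sconvex 0 (F i)) -> sconvex 0 (fun y => \sum_(i <- r) F i y).
Proof.
move=> Fcvx; elim: r => [|i r IH].
  by split=> [y|p q a _ _ _]; rewrite !big_nil //= lee_fin; lra.
have -> : (fun y => \sum_(j <- i :: r) F j y) = (fun y => F i y + \sum_(j <- r) F j y).
  by apply/funext => y; rewrite big_cons.
by rewrite -[0%R]addr0; apply: sconvexD.
Qed.

Lemma sconvex_strongly_convex s (l : V -> \bar R) :
  (forall x, l x != -oo) -> strongly_convex s l -> sconvex s l.
Proof.
move=> lninf lcvx; split=> // p q a a01 lp lq; apply: le_trans (lcvx p q a a01) _.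
by case: (l p) lp => // tp _; case: (l q) lq => // tq _; rewrite -EFinB lee_fin; lra.
Qed.

Lemma sconvex_argmin_growth s G z : (0 <= s)%R -> sconvex s G -> G z \is a fin_num ->
  (forall y, G z <= G y) -> forall y, G z + (s / 2 * sqn (y - z))%:E <= G y.
Proof.
move=> s0 [Gninf Gcvx] Gz zmin y.
have [Gy|] := boolP (G y \is a fin_num); last first.
  by rewrite fin_numE Gninf /= negbK => /eqP ->; rewrite leey.
have := fun a a01 => le_trans (zmin _) (Gcvx z y a a01 Gz Gy).
have K0 : (0 <= s / 2 * sqn (y - z))%R by rewrite mulr_ge0 ?divr_ge0 ?sqn_ge0.
case: (G z) Gz => // tz _; case: (G y) Gy => // ty _ /= tz_le.
rewrite -EFinD lee_fin; apply: (ler_add_vanishing K0) => a a01.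
have /andP[a0 _] := a01; rewrite -(ler_pM2l a0).
by have := tz_le a a01; rewrite lee_fin; nra.
Qed.

Lemma sconvex_argmin_unique s G y1 y2 : (0 < s)%R -> sconvex s G -> G y1 \is a fin_num ->
  (forall y, G y1 <= G y) -> (forall y, G y2 <= G y) -> y1 = y2.
Proof.
move=> s0 Gs G1 min1 min2.
have := le_trans (sconvex_argmin_growth (ltW s0) Gs G1 min1 y2) (min2 y1).
rewrite -[X in _ <= X](adde0 (G y1)) leeD2lE // lee_fin pmulr_rle0 ?divr_gt0 // => D0.
by apply/esym/eqP; rewrite -subr_eq0; apply/eqP/sqn_eq0/le_anti; rewrite D0 sqn_ge0.
Qed.

End FiniteStrongConvexity.

Section Separable.
Variables (R : realType) (m : nat).
Local Notation V := 'cV[R]_m.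
Implicit Types (F G : V -> \bar R).

Definition mix (S : pred 'I_m) (y y' : V) : V := \col_i (if S i then y i ord0 else y' i ord0).

Definition separable G := forall S y y', G (mix S y y') + G (mix S y' y) = G y + G y'.

Lemma separableD F G : separable F -> separable G -> separable (fun y => F y + G y).
Proof. by move=> sF sG S y y'; rewrite addeACA sF sG addeACA. Qed.

Lemma separableZ (r : R) G :
  (forall y, G y != -oo) -> separable G -> separable (fun y => r%:E * G y).
Proof.
move=> Gninf sG S y y'; have def y1 y2 : G y1 +? G y2.
  by move: (Gninf y1) (Gninf y2); case: (G y1); case: (G y2).
by rewrite -!muleDr // sG.
Qed.

Lemma separable_sum_coord (f : 'I_m -> R -> \bar R) :
  separable (fun y => \sum_i f i (y i ord0)).
Proof.
move=> S y y'; rewrite -!big_split; apply: eq_bigr => i _ /=.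
by rewrite !mxE; case: (S i) => //; rewrite addeC.
Qed.

Lemma separable_coord (h : R -> \bar R) (j : 'I_m) : separable (fun y => h (y j ord0)).
Proof. by move=> S y y'; rewrite !mxE; case: (S j) => //; rewrite addeC. Qed.

Lemma separable_sqn (w : V) : separable (fun y => (sqn (y - w) / 2)%:E).
Proof.
have -> : (fun y => (sqn (y - w) / 2)%:E) =
    (fun y => \sum_i (((y i ord0 - w i ord0) ^+ 2) / 2)%:E).
  by apply/funext => y; rewrite sumEFin /sqn /dot mulr_suml; congr EFin;
    apply: eq_bigr => i _; rewrite !mxE expr2.
exact: (separable_sum_coord (fun i s => ((s - w i ord0) ^+ 2 / 2)%:E)).
Qed.

Lemma separable_dot (c w : V) : separable (fun y => (dot c (y - w))%:E).
Proof.
have -> : (fun y => (dot c (y - w))%:E) =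
    (fun y => \sum_i (c i ord0 * (y i ord0 - w i ord0))%:E).
  by apply/funext => y; rewrite sumEFin; congr EFin; apply: eq_bigr => i _; rewrite !mxE.
exact: (separable_sum_coord (fun i s => (c i ord0 * (s - w i ord0))%:E)).
Qed.

(* The complementary exchange mix S z y cannot bring G below its minimum G z. *)
Lemma separable_argmin_mix G S y z : separable G -> (forall x, G x != -oo) ->
  (forall x, G z <= G x) -> G y \is a fin_num -> G (mix S y z) <= G y.
Proof.
move=> sG Gninf zmin Gy; have Gz := fin_num_le (Gninf z) (zmin y) Gy.
by rewrite -(leeD2rE _ _ Gz) -(sG S y z) leeD2l.
Qed.

End Separable.

Local Close Scope ereal_scope.

Section CouplingMatrix.
Variables (R : realType) (n d : nat) (b : 'I_n -> 'cV[R]_d).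
Local Notation B := (Bm b).

Lemma dot_Bm (w : 'cV[R]_d) (c : 'cV[R]_n) :
  dot (B *m w) c = n%:R^-1 * \sum_i dot (b i) w * c i ord0.
Proof.
rewrite {1}/dot mulr_sumr; apply: eq_bigr => i _; rewrite mulrA; congr (_ * _).
by rewrite mxE /dot mulr_sumr; apply: eq_bigr => r _; rewrite mxE mulrA.
Qed.

Lemma dot_Bm_single (w : 'cV[R]_d) (c : 'cV[R]_n) j :
  (forall i, i != j -> c i ord0 = 0) -> dot (B *m w) c = n%:R^-1 * dot (b j) w * c j ord0.
Proof.
move=> cj; rewrite dot_Bm (bigD1 j) //= big1 ?addr0 ?mulrA // => i /cj ->.
by rewrite mulr0.
Qed.

Lemma trBm_single (c : 'cV[R]_n) j :
  (forall i, i != j -> c i ord0 = 0) -> B^T *m c = (n%:R^-1 * c j ord0) *: b j.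
Proof.
move=> cj; apply/matrixP => r k; rewrite (ord1 k) !mxE (bigD1 j) //= big1 ?addr0.
  by rewrite !mxE; ring.
by move=> i /cj ->; rewrite mulr0.
Qed.

End CouplingMatrix.

Section StepSizes.
Variables (R : realType) (n : nat) (sigma Rp : R).
Hypotheses (n2 : (2 <= n)%N) (Rp0 : 0 < Rp) (sigma0 : 0 <= sigma).
Local Notation a := (sa n sigma Rp).
Local Notation A := (sA n sigma Rp).

Lemma sA_S k : (1 <= k)%N -> A k.+1 = A k + a k.+1.
Proof. by case: k => [|[|k]]. Qed.

Lemma sa_sA_gt0 k : 0 < a k.+1 /\ 0 < A k.+1.
Proof.
have n1 : 1 < n%:R :> R by rewrite ltr1n.
have a1 : 0 < n%:R / (2 * Rp) :> R by rewrite divr_gt0 ?mulr_gt0 //; lra.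
elim: k => [//|k [ak Ak]].
suff ak1 : 0 < a k.+2 by rewrite sA_S // addr_gt0.
case: k ak Ak => [|k] ak Ak; first by rewrite /sa /= divr_gt0 // subr_gt0.
rewrite /sa /= -/(sa _ _ _ k.+2) -/(sA _ _ _ k.+2) lt_min mulr_gt0 //=.
  by rewrite divr_gt0 ?mulr_gt0 // sqrtr_gt0 mulr_gt0 ?ltr_wpDr ?mulr_ge0 //; lra.
by rewrite addr_gt0 // invr_gt0 subr_gt0.
Qed.

End StepSizes.

Local Open Scope ereal_scope.

Lemma lee_Exp (R : realType) (n k : nat) (F G : (nat -> 'I_n) -> \bar R) :
  (forall js, F js <= G js) -> Exp k F <= Exp k G.
Proof.
move=> FG; apply: lee_wpmul2l; first by rewrite lee_fin invr_ge0 exprn_ge0.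
by apply: lee_sum => t _; apply: FG.
Qed.

Section VRPDA.
Variables (R : realType) (n d : nat) (b : 'I_n -> 'cV[R]_d) (Rp sigma : R)
  (gs : 'I_n -> R -> \bar R) (l : 'cV[R]_d -> \bar R)
  (x0 u : 'cV[R]_d) (y0 v : 'cV[R]_n)
  (xs : (nat -> 'I_n) -> nat -> 'cV[R]_d) (ys : (nat -> 'I_n) -> nat -> 'cV[R]_n).
Hypotheses (n2 : (2 <= n)%N) (Rp0 : (0 < Rp)%R) (sigma0 : (0 <= sigma)%R)
  (gs_ninf : forall i s, gs i s != -oo) (gs_convex : forall i, convex_ext (gs i))
  (l_ninf : forall x, l x != -oo) (l_convex : strongly_convex sigma l)
  (u_dom : domX l u) (v_dom : domY gs v)
  (xs0 : forall js, xs js 0%N = x0) (ys0 : forall js, ys js 0%N = y0)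
  (ys1_min : forall js y, psit1 b gs Rp x0 y0 v (ys js 1%N) <= psit1 b gs Rp x0 y0 v y)
  (xs1_min : forall js x, phit1 b l Rp x0 u ys js (xs js 1%N) <= phit1 b l Rp x0 u ys js x)
  (ys_min : forall js (k : nat) y, (2 <= k)%N ->
     psi b gs sigma Rp x0 y0 v xs js k (ys js k) <= psi b gs sigma Rp x0 y0 v xs js k y)
  (xs_min : forall js (k : nat) x, (2 <= k)%N ->
     phi b l sigma Rp x0 u ys js k (xs js k) <= phi b l sigma Rp x0 u ys js k x).

Local Notation Psi js k := (psi b gs sigma Rp x0 y0 v xs js k).
Local Notation Phi js k := (phi b l sigma Rp x0 u ys js k).
Local Notation Psit := (psit1 b gs Rp x0 y0 v).
Local Notation Phit js := (phit1 b l Rp x0 u ys js).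
Local Notation a := (sa n sigma Rp).
Local Notation A := (sA n sigma Rp).
Local Notation B := (Bm b).

Let n_gt0 : (0 < n%:R :> R)%R.
Proof. by rewrite ltr0n; case: n n2. Qed.

Let at1_gt0 : (0 < at1 Rp)%R.
Proof. by rewrite invr_gt0 mulr_gt0. Qed.

Let sa_gt0 k : (0 < a k.+1)%R.
Proof. by case: (sa_sA_gt0 n2 Rp0 sigma0 k). Qed.

Let sA_gt0 k : (0 < A k.+1)%R.
Proof. by case: (sa_sA_gt0 n2 Rp0 sigma0 k). Qed.

Lemma psi_S js k y : Psi js k.+2 y = Psi js k.+1 y + (a k.+2)%:E *
  ((- dot (b (js k.+2)) (xbar sigma Rp xs js k.+1) * (y (js k.+2) ord0 - v (js k.+2) ord0))%:E
   + gs (js k.+2) (y (js k.+2) ord0)).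
Proof. by []. Qed.

Lemma gstar_sconvex : sconvex 0 (gstar gs).
Proof.
have n1_gt0 : (0 < n%:R^-1 :> R)%R by rewrite invr_gt0.
have := sconvexZ n1_gt0 (sconvex_sum (index_enum 'I_n)
  (fun i => sconvex_coord i (gs_ninf i) (gs_convex i))).
by rewrite mulr0.
Qed.

Lemma psit1_sconvex : sconvex 1 Psit.
Proof.
have := sconvexD (sconvex_sqn y0) (sconvexZ at1_gt0
  (sconvexD (sconvex_affine (dot_affine (- (B *m x0)) v)) gstar_sconvex)).
by rewrite addr0 mulr0 addr0.
Qed.

Lemma psi_sconvex js k : sconvex n%:R (Psi js k.+1).
Proof.
elim: k => [|k IH]; first by have := sconvexZ n_gt0 psit1_sconvex; rewrite mulr1.
pose j := js k.+2; pose e := (- dot (b j) (xbar sigma Rp xs js k.+1))%R.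
have lin_aff (p q : 'cV[R]_n) (c : R) : (e * (((1 - c) *: p + c *: q) j ord0 - v j ord0) =
    (1 - c) * (e * (p j ord0 - v j ord0)) + c * (e * (q j ord0 - v j ord0)))%R.
  by rewrite !mxE; ring.
have := sconvexD IH (sconvexZ (sa_gt0 k.+1)
  (sconvexD (sconvex_affine lin_aff) (sconvex_coord j (gs_ninf j) (gs_convex j)))).
by rewrite addr0 mulr0 addr0.
Qed.

Lemma phit1_sconvex js : sconvex (1 + at1 Rp * sigma) (Phit js).
Proof.
have := sconvexD (sconvex_sqn x0) (sconvexZ at1_gt0
  (sconvexD (sconvex_affine (dot_affinel (zs b ys js 1) u))
            (sconvex_strongly_convex l_ninf l_convex))).
by rewrite add0r.
Qed.

Lemma phi_sconvex js k : sconvex (n%:R + sigma * A k.+1) (Phi js k.+1).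
Proof.
elim: k => [|k IH].
  have -> : (n%:R + sigma * A 1 = n%:R * (1 + at1 Rp * sigma))%R by rewrite /sA /at1 /=; ring.
  exact: sconvexZ n_gt0 (phit1_sconvex js).
have -> : (n%:R + sigma * A k.+2 = n%:R + sigma * A k.+1 + a k.+2 * (0 + sigma))%R.
  by rewrite [A k.+2]sA_S //; ring.
exact: sconvexD IH (sconvexZ (sa_gt0 k.+1)
  (sconvexD (sconvex_affine (dot_affinel _ u)) (sconvex_strongly_convex l_ninf l_convex))).
Qed.

Lemma psi_argmin js k y : Psi js k.+1 (ys js k.+1) <= Psi js k.+1 y.
Proof.
case: k => [|k]; last exact: ys_min.
by apply: lee_wpmul2l; [rewrite lee_fin ler0n | apply: ys1_min].
Qed.

Lemma phi_argmin js k x : Phi js k.+1 (xs js k.+1) <= Phi js k.+1 x.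
Proof.
case: k => [|k]; last exact: xs_min.
by apply: lee_wpmul2l; [rewrite lee_fin ler0n | apply: xs1_min].
Qed.

Lemma gstar_v_fin : gstar gs v \is a fin_num.
Proof.
rewrite fin_numM //; apply/sum_fin_numP => i _ _.
by rewrite fin_numE gs_ninf lt_eqF ?v_dom.
Qed.

Lemma psi_v_fin js k : Psi js k v \is a fin_num.
Proof.
elim: k => [//|[_|k IH]].
  by rewrite /= fin_numM // fin_numD /= fin_numM // fin_numD /= gstar_v_fin.
by rewrite /= fin_numD IH fin_numM // fin_numD /= fin_numE gs_ninf lt_eqF ?v_dom.
Qed.

Lemma phi_u_fin js k : Phi js k u \is a fin_num.
Proof.
have lu : l u \is a fin_num by rewrite fin_numE l_ninf lt_eqF.
elim: k => [//|[_|k IH]].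
  by rewrite /= fin_numM // fin_numD /= fin_numM // fin_numD /= lu.
by rewrite /= fin_numD IH fin_numM // fin_numD /= lu.
Qed.

Lemma psi_argmin_fin js k : Psi js k.+1 (ys js k.+1) \is a fin_num.
Proof.
by apply: fin_num_le (psi_argmin js k v) (psi_v_fin js k.+1); case: (psi_sconvex js k).
Qed.

Lemma phi_argmin_fin js k : Phi js k.+1 (xs js k.+1) \is a fin_num.
Proof.
by apply: fin_num_le (phi_argmin js k u) (phi_u_fin js k.+1); case: (phi_sconvex js k).
Qed.

Lemma psi_separable js k : separable (Psi js k).
Proof.
have gstar_sep : separable (gstar gs).
  apply: separableZ (separable_sum_coord gs) => y.
  by apply: sume_neqNy => i; apply: gs_ninf.
have psit1_sep : separable Psit.
  apply: separableD (separable_sqn y0) (separableZ _ _ _) => [y|].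
    by apply: adde_neqNy => //; case: gstar_sconvex.
  exact: separableD (separable_dot _ _) gstar_sep.
elim: k => [|[_|k IH]]; first exact: separable_sqn.
  by apply: separableZ psit1_sep; case: psit1_sconvex.
pose j := js k.+2; pose e := (- dot (b j) (xbar sigma Rp xs js k.+1))%R.
apply: separableD IH (separableZ _ _
  (separable_coord (fun s => (e * (s - v j ord0))%:E + gs j s) j)) => y.
exact: adde_neqNy.
Qed.

Lemma ys_update_coord js k i : i != js k.+2 -> ys js k.+2 i ord0 = ys js k.+1 i ord0.
Proof.
move=> ij; set j := js k.+2; set y := ys js k.+2.
pose w := mix (pred1 j) y (ys js k.+1).
have Psi1_y : Psi js k.+1 y \is a fin_num.
  by move: (psi_argmin_fin js k.+1); rewrite psi_S fin_numD => /andP[].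
have w_le : Psi js k.+1 w <= Psi js k.+1 y.
  by apply: separable_argmin_mix (psi_separable _ _) _ (psi_argmin _ _) Psi1_y;
     case: (psi_sconvex js k).
have w_min x : Psi js k.+2 w <= Psi js k.+2 x.
  apply: le_trans (psi_argmin js k.+1 x).
  by rewrite !psi_S -/j [w j _]mxE /= eqxx leeD2r.
have -> : y = w.
  exact: sconvex_argmin_unique n_gt0 (psi_sconvex js k.+1)
    (psi_argmin_fin js k.+1) (psi_argmin js k.+1) w_min.
by rewrite mxE /= (negbTE ij).
Qed.

Lemma ys_diff_single js k i : i != js k.+2 -> ((ys js k.+2 - ys js k.+1) i ord0 = 0)%R.
Proof. by move=> ij; rewrite !mxE ys_update_coord // subrr. Qed.

Lemma trBm_ys_S js k : (B^T *m ys js k.+2 = B^T *m ys js k.+1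
  + (n%:R^-1 * (ys js k.+2 (js k.+2) ord0 - ys js k.+1 (js k.+2) ord0)) *: b (js k.+2))%R.
Proof.
rewrite -{1}(subrK (ys js k.+1) (ys js k.+2)) mulmxDr addrC.
by rewrite (trBm_single _ (@ys_diff_single js k)) !mxE.
Qed.

Lemma zs_trBm js k : (1 <= k)%N -> zs b ys js k = (B^T *m ys js k)%R.
Proof.
case: k => // k _; elim: k => [//|k IH].
by rewrite -[LHS]/(zs b ys js k.+1 + _)%R IH trBm_ys_S.
Qed.

Lemma phi_S js k x : Phi js k.+2 x = Phi js k.+1 x + (a k.+2)%:E *
  ((dot (x - u) (B^T *m ys js k.+2)
    + (n%:R - 1) * dot (x - u) (B^T *m (ys js k.+2 - ys js k.+1)))%:E + l x).
Proof.
rewrite -[LHS]/(Phi js k.+1 x + _) (@zs_trBm js k.+1) // trBm_ys_S.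
rewrite (trBm_single _ (@ys_diff_single js k)) !mxE !dotDr !dotZr.
by congr (_ + _ * (_%:E + _)); field; rewrite gt_eqF.
Qed.

Lemma psi_history js js' k : (forall i, (i <= k)%N -> js i = js' i) ->
  (forall i, (i < k)%N -> xs js i = xs js' i) -> Psi js k =1 Psi js' k.
Proof.
elim: k => [//|[//|k] IH] js_eq xs_eq y.
have js_eq' i : (i <= k.+1)%N -> js i = js' i by move=> ik; apply/js_eq/leqW.
have xs_eq' i : (i < k.+1)%N -> xs js i = xs js' i by move=> ik; apply/xs_eq/leqW.
by rewrite !psi_S (IH js_eq' xs_eq') js_eq // /xbar !xs_eq.
Qed.

Lemma phi_history js js' k : (forall i, (i <= k)%N -> ys js i = ys js' i) ->
  Phi js k =1 Phi js' k.
Proof.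
elim: k => [//|[|k] IH] ys_eq x; first by rewrite /= /phit1 /= ys_eq.
have ys_eq' i : (i <= k.+1)%N -> ys js i = ys js' i by move=> ik; apply/ys_eq/leqW.
by rewrite !phi_S (IH ys_eq') !ys_eq.
Qed.

(* The iterates are arbitrary functions of the whole index sequence, but as
   unique minimizers those of step k only depend on its entries up to k. *)
Lemma iterates_history js js' m : (forall i, (i <= m)%N -> js i = js' i) ->
  forall k, (k <= m)%N -> xs js k = xs js' k /\ ys js k = ys js' k.
Proof.
move=> js_eq; elim/ltn_ind => -[_ _|k IH km]; first by rewrite !xs0 !ys0.
have xs_eq i : (i < k.+1)%N -> xs js i = xs js' i.
  by move=> ik; case: (IH i ik (leq_trans (ltnW ik) km)).
have ys_eq i : (i < k.+1)%N -> ys js i = ys js' i.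
  by move=> ik; case: (IH i ik (leq_trans (ltnW ik) km)).
have Psi_eq := psi_history (fun i ik => js_eq i (leq_trans ik km)) xs_eq.
have ys_eq1 : ys js k.+1 = ys js' k.+1.
  apply: sconvex_argmin_unique n_gt0 (psi_sconvex js k) (psi_argmin_fin js k)
    (psi_argmin js k) _ => y.
  by rewrite !Psi_eq; apply: psi_argmin.
have Phi_eq : Phi js k.+1 =1 Phi js' k.+1.
  by apply: phi_history => i; rewrite leq_eqVlt => /predU1P[->|/ys_eq].
split=> //; have s_gt0 : (0 < n%:R + sigma * A k.+1)%R.
  by rewrite ltr_wpDr ?mulr_ge0 // ltW ?sA_gt0.
apply: sconvex_argmin_unique s_gt0 (phi_sconvex js k) (phi_argmin_fin js k)
  (phi_argmin js k) _ => x.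
by rewrite !Phi_eq; apply: phi_argmin.
Qed.

Definition psi_lin js k : R :=
  (- dot (b (js k)) (xbar sigma Rp xs js k.-1) * (ys js k (js k) ord0 - v (js k) ord0))%R.

Lemma psi_descent js k :
  Psi js k.+1 (ys js k.+1) + (n%:R / 2 * sqn (ys js k.+2 - ys js k.+1))%:E
  + (a k.+2)%:E * gs (js k.+2) (ys js k.+2 (js k.+2) ord0)
  + (a k.+2 * psi_lin js k.+2)%:E
  <= Psi js k.+2 (ys js k.+2).
Proof.
rewrite psi_S muleDr // [_%:E * _%:E + _]addeC addeA -EFinM; apply/leeD2r/leeD2r.
exact: sconvex_argmin_growth (ler0n _ _) (psi_sconvex js k) (psi_argmin_fin js k)
  (psi_argmin js k) _.
Qed.

Lemma phi_descent js k :
  Phi js k.+1 (xs js k.+1)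
  + ((n%:R + sigma * A k.+1) / 2 * sqn (xs js k.+2 - xs js k.+1))%:E
  + (a k.+2)%:E * ((dot (xs js k.+2 - u) (B^T *m ys js k.+2)
      + (n%:R - 1) * dot (xs js k.+2 - u) (B^T *m (ys js k.+2 - ys js k.+1)))%:E
      + l (xs js k.+2))
  <= Phi js k.+2 (xs js k.+2).
Proof.
rewrite phi_S; apply: leeD2r.
have s_ge0 : (0 <= n%:R + sigma * A k.+1)%R by rewrite addr_ge0 ?mulr_ge0 // ltW ?sA_gt0.
exact: sconvex_argmin_growth s_ge0 (phi_sconvex js k) (phi_argmin_fin js k)
  (phi_argmin js k) _.
Qed.

Definition psi_coupling js k : R :=
  (a k * dot (B *m (xs js k - xs js k.-1)) (ys js k - v)
   - a k.-1 * dot (B *m (xs js k.-1 - xs js k.-2)) (ys js k.-1 - v)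
   - n%:R * a k.-1 * dot (B *m (xs js k.-1 - xs js k.-2)) (ys js k - ys js k.-1)
   + a k * dot (- (B *m xs js k)) (ys js k - v)
   - (n%:R - 1) * a k * (dot (B *m (xs js k.-1 - u)) (ys js k - ys js k.-1)
                         + dot (B *m u) (ys js k - ys js k.-1)))%R.

Lemma psi_coupling_S js k : let W := (a k.+2 *: xbar sigma Rp xs js k.+1)%R in
  (a k.+2 * psi_lin js k.+2 - psi_coupling js k.+2 =
   dot (B *m W) (ys js k.+1 - v)
   - dot (b (js k.+2)) W * (ys js k.+1 (js k.+2) ord0 - v (js k.+2) ord0))%R.
Proof.
rewrite /psi_lin /psi_coupling /xbar /=.
set j := js k.+2; set y2 := ys js k.+2; set y1 := ys js k.+1.
have -> : (y2 - v = (y2 - y1) + (y1 - v))%R by rewrite addrA subrK.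
rewrite !dotNl !(dotDr (y2 - y1)) !(dot_Bm_single _ _ (@ys_diff_single js k)) !mxE.
do 3 rewrite ?mulmxDr ?mulmxN -?scalemxAr.
rewrite !(dotDl, dotNl, dotZl, dotDr, dotNr, dotZr).
by field; rewrite !gt_eqF ?sa_gt0.
Qed.

Lemma sum_psi_coupling k :
  (\sum_(t : {ffun 'I_k.+3 -> 'I_n}) (a k.+2 * psi_lin (fun i => t (inord i)) k.+2
     - psi_coupling (fun i => t (inord i)) k.+2) = 0)%R.
Proof.
under eq_bigr do rewrite psi_coupling_S.
pose W (js : nat -> 'I_n) := (a k.+2 *: xbar sigma Rp xs js k.+1)%R.
pose F (t : {ffun 'I_k.+3 -> 'I_n}) j := let js i := t (inord i) in
  (dot (B *m W js) (ys js k.+1 - v) - dot (b j) (W js) * (ys js k.+1 j ord0 - v j ord0))%R.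
have F_indep (t t' : {ffun 'I_k.+3 -> 'I_n}) :
    (forall i, i != inord k.+2 -> t i = t' i) -> F t =1 F t'.
  move=> tt' j; have js_eq i : (i <= k.+1)%N -> t (inord i) = t' (inord i).
    move=> ik; apply/tt'/eqP => /(congr1 val).
    by rewrite /= !inordK ?ltnS ?(leqW ik) // => ik'; move: ik; rewrite ik' ltnn.
  have [xs_eq1 ys_eq1] := iterates_history js_eq (leqnn _).
  have [xs_eq0 _] := iterates_history js_eq (leqnSn _).
  by rewrite /F /W /xbar xs_eq1 ys_eq1 xs_eq0.
have sumF t : (\sum_j F t j = 0)%R.
  rewrite /F sumrB sumr_const card_ord dot_Bm -mulrnAl -(mulr_natr (n%:R^-1 : R) n).
  rewrite mulVf ?gt_eqF // mul1r.
  by apply/eqP; rewrite subr_eq0; apply/eqP/eq_bigr => j _; rewrite !mxE.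
have := sum_resample_coord F_indep; rewrite big1 // card_ord => /esym/eqP.
by rewrite mulrn_eq0 gtn_eqF ?(ltnW n2) //= => /eqP.
Qed.

Lemma Exp_psi_descent k :
  Exp k.+2 (fun js => Psi js k.+1 (ys js k.+1) + (n%:R / 2 * sqn (ys js k.+2 - ys js k.+1))%:E
    + (a k.+2)%:E * gs (js k.+2) (ys js k.+2 (js k.+2) ord0) + (psi_coupling js k.+2)%:E)
  <= Exp k.+2 (fun js => Psi js k.+2 (ys js k.+2)).
Proof.
apply: lee_wpmul2l; first by rewrite lee_fin invr_ge0 exprn_ge0.
rewrite -[X in X <= _]adde0 -[X in _ + X](congr1 EFin (sum_psi_coupling k)) -sumEFin -big_split.
apply: lee_sum => t _; apply: le_trans (psi_descent _ k).
by rewrite /= -addeA -EFinD subrKC.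
Qed.

Lemma Exp_phi_descent k :
  Exp k.+2 (fun js => Phi js k.+1 (xs js k.+1)
    + ((n%:R + sigma * A k.+1) / 2 * sqn (xs js k.+2 - xs js k.+1))%:E
    + (a k.+2)%:E * ((dot (xs js k.+2 - u) (B^T *m ys js k.+2)
        + (n%:R - 1) * dot (xs js k.+2 - u) (B^T *m (ys js k.+2 - ys js k.+1)))%:E
        + l (xs js k.+2)))
  <= Exp k.+2 (fun js => Phi js k.+2 (xs js k.+2)).
Proof. by apply: lee_Exp => js; apply: phi_descent. Qed.

End VRPDA.

Theorem lemma5 (R : realType) (n d : nat) (b : 'I_n -> 'cV[R]_d) (Rp sigma : R)
  (gs : 'I_n -> R -> \bar R) (l : 'cV[R]_d -> \bar R)
  (x0 u : 'cV[R]_d) (y0 v : 'cV[R]_n)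
  (xs : (nat -> 'I_n) -> nat -> 'cV[R]_d) (ys : (nat -> 'I_n) -> nat -> 'cV[R]_n) :
  (2 <= n)%N -> (0 < Rp)%R -> (forall i, Num.sqrt (sqn (b i)) <= Rp)%R ->
  (forall i, proper_fun (gs i) /\ lower_semicontinuous (gs i) /\ convex_ext (gs i)) ->
  (0 <= sigma)%R ->
  proper_fun l -> lower_semicontinuous l -> strongly_convex sigma l ->
  domX l x0 -> domX l u -> domY gs y0 -> domY gs v ->
  (* initialization *)
  (forall js, xs js 0%N = x0) -> (forall js, ys js 0%N = y0) ->
  (* y_1 = argmin tilde psi_1, x_1 = argmin tilde phi_1 *)
  (forall js y, psit1 b gs Rp x0 y0 v (ys js 1%N) <= psit1 b gs Rp x0 y0 v y) ->
  (forall js x, phit1 b l Rp x0 u ys js (xs js 1%N) <= phit1 b l Rp x0 u ys js x) ->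
  (* y_k = argmin psi_k, x_k = argmin phi_k, k >= 2 *)
  (forall js (k : nat) y, (2 <= k)%N ->
     psi b gs sigma Rp x0 y0 v xs js k (ys js k) <= psi b gs sigma Rp x0 y0 v xs js k y) ->
  (forall js (k : nat) x, (2 <= k)%N ->
     phi b l sigma Rp x0 u ys js k (xs js k) <= phi b l sigma Rp x0 u ys js k x) ->
  forall k : nat, (2 <= k)%N ->
  let a := sa n sigma Rp in
  let A := sA n sigma Rp in
  let B := Bm b in
  Exp k (fun js => psi b gs sigma Rp x0 y0 v xs js k (ys js k))
  >= Exp k (fun js =>
       let j := js k in
       let yk := ys js k in let ykm1 := ys js k.-1 in
       let xk := xs js k in let xkm1 := xs js k.-1 in let xkm2 := xs js k.-2 in
       psi b gs sigma Rp x0 y0 v xs js k.-1 ykm1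
       + (n%:R / 2 * sqn (yk - ykm1))%:E
       + (a k)%:E * gs j (yk j ord0)
       + (a k * dot (B *m (xk - xkm1)) (yk - v)
          - a k.-1 * dot (B *m (xkm1 - xkm2)) (ykm1 - v)
          - n%:R * a k.-1 * dot (B *m (xkm1 - xkm2)) (yk - ykm1)
          + a k * dot (- (B *m xk)) (yk - v)
          - (n%:R - 1) * a k * (dot (B *m (xkm1 - u)) (yk - ykm1)
                                + dot (B *m u) (yk - ykm1)))%:E)
  /\
  Exp k (fun js => phi b l sigma Rp x0 u ys js k (xs js k))
  >= Exp k (fun js =>
       let yk := ys js k in let ykm1 := ys js k.-1 in
       let xk := xs js k in let xkm1 := xs js k.-1 in
       phi b l sigma Rp x0 u ys js k.-1 xkm1
       + ((n%:R + sigma * A k.-1) / 2 * sqn (xk - xkm1))%:E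
       + (a k)%:E * ((dot (xk - u) (B^T *m yk)
                      + (n%:R - 1) * dot (xk - u) (B^T *m (yk - ykm1)))%:E + l xk)).
Proof.
(* Lower semicontinuity, |b_i| <= R' and x0 \in X, y0 \in Y only serve the
   existence of the minimizers, which is assumed here. *)
move=> n2 Rp0 _ gs_props sigma0 [l_ninf _] _ l_convex _ u_dom _ v_dom.
move=> xs0 ys0 ys1_min xs1_min ys_min xs_min [|[|k]] // _ a A B.
have gs_ninf i s : gs i s != -oo by case: (gs_props i) => -[].
have gs_convex i : convex_ext (gs i) by case: (gs_props i) => _ [].
by split; [apply: Exp_psi_descent | apply: Exp_phi_descent].
Qed.
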